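(* Let $\alpha > 0$, $\beta > 0$, $\tau > 0$, and let $I$ be an interval which is a finite union of mesh intervals $[k\tau,(k+1)\tau]$, $k \in \mathbb{Z}$. Let $u$ be continuous on $I$ and affine on each mesh interval, and let $v$ be its upwinded interpolant. Then $$\int_I |\dot v |^2 = \Phi(p) \int_I |\dot u|^2,$$ where $p=\beta \tau / \alpha $ is the P\'eclet number and $$\Phi(p) = \left ( \frac{\exp(p) +1}{\exp(p) -1} \right ) \frac{p}{2}.$$
   Context: The upwinded interpolant of a continuous function $u$ is the unique continuous function $v$ with $v(k\tau) = u(k\tau)$ at every node $k\tau$ and which, on each mesh interval $[k\tau, (k+1)\tau]$, is of the form $v(t) = c_1 + c_2 \exp(-\beta t/\alpha)$ for constants $c_1, c_2$ (depending on the interval). A dot denotes the derivative. *)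

From Stdlib Require Import Reals.
From Coquelicot Require Import Coquelicot.
Open Scope R_scope.

Definition Phi (p : R) : R := ((exp p + 1) / (exp p - 1)) * (p / 2).

Definition peclet (alpha beta tau : R) : R := beta * tau / alpha.

Definition in_mesh (tau : R) (k : Z) (t : R) : Prop :=
  IZR k * tau <= t <= (IZR k + 1) * tau.

Definition mesh_affine (tau : R) (a b : Z) (u : R -> R) : Prop :=
  forall k : Z, (a <= k < b)%Z ->
    exists c d : R, forall t, in_mesh tau k t -> u t = c + d * t.

Definition upwinded_interpolant (alpha beta tau : R) (a b : Z)
    (u v : R -> R) : Prop :=
  continuous_on (fun t => IZR a * tau <= t <= IZR b * tau) v /\
  (forall k : Z, (a <= k <= b)%Z -> v (IZR k * tau) = u (IZR k * tau)) /\
  (forall k : Z, (a <= k < b)%Z ->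
     exists c1 c2 : R, forall t, in_mesh tau k t ->
       v t = c1 + c2 * exp (- beta * t / alpha)).

From Stdlib Require Import Reals ZArith Lra Lia.
From Coquelicot Require Import Coquelicot.
Open Scope R_scope.

(* On a mesh cell [l, l + tau] both [u] and [v] are determined by their two
   endpoint values: [u t = c + d t] and [v t = c1 + c2 exp (-q t)] with
   [q = beta / alpha].  Then [int |u'|^2 = d^2 tau], while
   [int |v'|^2 = q c2^2 (E0^2 - E1^2) / 2] with [E0 = exp (-q l)] and
   [E1 = exp (-q (l + tau))].  Matching the endpoint values gives
   [d tau = c2 (E1 - E0)], and since [E0 = exp (q tau) E1] the ratio of the two
   energies is [Phi (q tau)], independently of the cell and of the data.
   Summing over the cells yields the theorem. *)

Lemma Derive_eq_on_interior (f g : R -> R) (l r x : R) :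
  (forall t, l <= t <= r -> f t = g t) -> l < x < r -> Derive f x = Derive g x.
Proof.
  intros Efg Hx; apply Derive_ext_loc.
  apply (locally_interval _ x l r); [apply Hx | apply Hx |].
  intros t Hl Hr; apply Efg; simpl in *; lra.
Qed.

Lemma is_RInt_sq_Derive_affine (l r c d : R) (u : R -> R) :
  l <= r -> (forall t, l <= t <= r -> u t = c + d * t) ->
  is_RInt (fun t => Rabs (Derive u t) ^ 2) l r (d ^ 2 * (r - l)).
Proof.
  intros Hlr Hu.
  apply (is_RInt_ext (V := R_NormedModule) (fun _ => d ^ 2)).
  - rewrite Rmin_left, Rmax_right by lra; intros x Hx.
    change (d ^ 2 = Rabs (Derive u x) ^ 2).
    rewrite pow2_abs, (Derive_eq_on_interior u (fun t => c + d * t) l r x Hu Hx).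
    f_equal; symmetry; apply is_derive_unique; auto_derive; [exact I | ring].
  - replace (d ^ 2 * (r - l)) with (scal (r - l) (d ^ 2))
      by (rewrite Rmult_comm; reflexivity).
    exact (is_RInt_const l r (d ^ 2)).
Qed.

Lemma is_RInt_sq_Derive_exp (l r q c1 c2 : R) (v : R -> R) :
  l <= r -> (forall t, l <= t <= r -> v t = c1 + c2 * exp (- q * t)) ->
  is_RInt (fun t => Rabs (Derive v t) ^ 2) l r
    (q * c2 ^ 2 / 2 * (exp (- q * l) ^ 2 - exp (- q * r) ^ 2)).
Proof.
  intros Hlr Hv.
  set (g := fun t => (q * c2 * exp (- q * t)) ^ 2).
  apply (is_RInt_ext (V := R_NormedModule) g).
  - rewrite Rmin_left, Rmax_right by lra; intros x Hx.
    change (g x = Rabs (Derive v x) ^ 2).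
    rewrite pow2_abs, (Derive_eq_on_interior v _ l r x Hv Hx); unfold g.
    replace (Derive _ x) with (- (q * c2 * exp (- q * x))).
    + ring.
    + symmetry; apply is_derive_unique; auto_derive; [exact I | ring].
  - set (G := fun t => - (q * c2 ^ 2 / 2) * exp (- q * t) ^ 2).
    replace (q * c2 ^ 2 / 2 * _) with (minus (G r) (G l))
      by (unfold G, minus, plus, opp; simpl; ring).
    apply (is_RInt_derive G g).
    + intros x _; unfold G, g; auto_derive; [exact I | field].
    + intros x _; apply (ex_derive_continuous g); unfold g; auto_derive; exact I.
Qed.

Lemma is_RInt_sq_Derive_upwind_cell (q tau l c d c1 c2 : R) (u v : R -> R) :
  0 < q -> 0 < tau ->
  (forall t, l <= t <= l + tau -> u t = c + d * t) ->
  (forall t, l <= t <= l + tau -> v t = c1 + c2 * exp (- q * t)) ->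
  v l = u l -> v (l + tau) = u (l + tau) ->
  is_RInt (fun t => Rabs (Derive v t) ^ 2) l (l + tau) (Phi (q * tau) * (d ^ 2 * tau)).
Proof.
  intros Hq Htau Hu Hv Hvl Hvr.
  set (E1 := exp (- q * (l + tau))).
  set (Q := exp (q * tau)).
  assert (HQ : 1 < Q) by (rewrite <- exp_0; apply exp_increasing; nra).
  assert (HE0 : exp (- q * l) = Q * E1).
  { unfold Q, E1; rewrite <- exp_plus; f_equal; ring. }
  assert (Hd : d * tau = c2 * (E1 - Q * E1)).
  { rewrite Hu, Hv in Hvl, Hvr by lra; rewrite HE0 in Hvl; fold E1 in Hvr; lra. }
  replace (Phi (q * tau) * (d ^ 2 * tau))
    with (q * c2 ^ 2 / 2 * (exp (- q * l) ^ 2 - E1 ^ 2)).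
  - apply is_RInt_sq_Derive_exp with c1; [lra | exact Hv].
  - replace (d ^ 2 * tau) with ((d * tau) ^ 2 / tau) by (field; lra).
    rewrite Hd, HE0; unfold Phi; fold Q; field; lra.
Qed.

Lemma is_RInt_mesh_proportional (f g : R -> R) (C tau : R) (a b : Z) :
  (a <= b)%Z ->
  (forall k, (a <= k < b)%Z -> exists G : R,
     is_RInt g (IZR k * tau) (IZR k * tau + tau) G /\
     is_RInt f (IZR k * tau) (IZR k * tau + tau) (C * G)) ->
  exists G : R, is_RInt g (IZR a * tau) (IZR b * tau) G /\
            is_RInt f (IZR a * tau) (IZR b * tau) (C * G).
Proof.
  intros Hab Hcell.
  replace b with (a + Z.of_nat (Z.to_nat (b - a)))%Z in * by lia.
  clear Hab; induction (Z.to_nat (b - a)) as [|n IH].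
  - exists 0; rewrite Z.add_0_r, Rmult_0_r; split; apply (is_RInt_point (V := R_NormedModule)).
  - destruct IH as [G [Hg Hf]]; [intros k Hk; apply Hcell; lia |].
    destruct (Hcell (a + Z.of_nat n)%Z) as [G' [Hg' Hf']]; [lia |].
    replace (IZR (a + Z.of_nat (S n)) * tau)
      with (IZR (a + Z.of_nat n) * tau + tau)
      by (rewrite Nat2Z.inj_succ, Z.add_succ_r, succ_IZR; ring).
    exists (G + G'); split.
    + exact (is_RInt_Chasles g _ _ _ _ _ Hg Hg').
    + rewrite Rmult_plus_distr_l; exact (is_RInt_Chasles f _ _ _ _ _ Hf Hf').
Qed.

Theorem proposition10 (alpha beta tau : R) (a b : Z) (u v : R -> R) :
  0 < alpha -> 0 < beta -> 0 < tau -> (a < b)%Z ->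
  continuous_on (fun t => IZR a * tau <= t <= IZR b * tau) u ->
  mesh_affine tau a b u ->
  upwinded_interpolant alpha beta tau a b u v ->
  RInt (fun t => Rabs (Derive v t) ^ 2) (IZR a * tau) (IZR b * tau)
  = Phi (peclet alpha beta tau) *
    RInt (fun t => Rabs (Derive u t) ^ 2) (IZR a * tau) (IZR b * tau).
Proof.
  intros Halpha Hbeta Htau Hab _ Hu [_ [Hnodes Hv]].
  assert (Hq : 0 < beta / alpha) by (apply Rdiv_lt_0_compat; lra).
  assert (Hpeclet : peclet alpha beta tau = beta / alpha * tau)
    by (unfold peclet; field; lra).
  destruct (is_RInt_mesh_proportional (fun t => Rabs (Derive v t) ^ 2)
              (fun t => Rabs (Derive u t) ^ 2) (Phi (peclet alpha beta tau))
              tau a b) as [G [Hu_int Hv_int]]; [lia | |].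
  - intros k Hk.
    destruct (Hu k Hk) as [c [d Hcd]]; destruct (Hv k Hk) as [c1 [c2 Hc]].
    unfold in_mesh in Hcd, Hc.
    assert (Hcell_u : forall t, IZR k * tau <= t <= IZR k * tau + tau -> u t = c + d * t)
      by (intros t Ht; apply Hcd; lra).
    exists (d ^ 2 * (IZR k * tau + tau - IZR k * tau)); split.
    + apply is_RInt_sq_Derive_affine with c; [lra | exact Hcell_u].
    + replace (IZR k * tau + tau - IZR k * tau) with tau by ring.
      rewrite Hpeclet.
      apply (is_RInt_sq_Derive_upwind_cell _ _ _ c d c1 c2 u v Hq Htau Hcell_u).
      * intros t Ht; rewrite Hc by lra; do 3 f_equal; field; lra.
      * apply Hnodes; lia.
      * replace (IZR k * tau + tau) with (IZR (k + 1) * tau)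
          by (rewrite plus_IZR; ring).
        apply Hnodes; lia.
  - rewrite (is_RInt_unique _ _ _ _ Hv_int), (is_RInt_unique _ _ _ _ Hu_int).
    reflexivity.
Qed.
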